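(* Let $F:\mathbb{R}^d\to[0,\infty)$ be differentiable and $\mu$-strongly convex ($\mu>0$), let $\lambda_t>0$, $\epsilon_t\in[0,1)$, and $x_{t-1}\in\mathbb{R}^d$. Let $F_{\lambda_t,x_{t-1}}(x)=F(x)+\lambda_t\|x-x_{t-1}\|_2^2$ with unique minimizer $x^\star_{\lambda_t,x_{t-1}}$, and let $x_t\in\mathbb{R}^d$ satisfy $F_{\lambda_t,x_{t-1}}(x_t)\le(1+\epsilon_t)F_{\lambda_t,x_{t-1}}(x^\star_{\lambda_t,x_{t-1}})$. Let $r_t^\star=\|x_{t-1}-x^\star_{\lambda_t,x_{t-1}}\|_2$. Then $$\|x_t-x_{t-1}\|_2\le\sqrt{\frac{2\epsilon_t}{2\lambda_t+\mu}F(x_{t-1})}+\frac{\|\nabla F(x_{t-1})\|_2}{2\lambda_t+\mu}$$ and $$\|x_t-x_{t-1}\|_2\ge r_t^\star-\sqrt{\frac{2\epsilon_t}{2\lambda_t+\mu}F(x_{t-1})}.$$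
   Context: $F$ is $\mu$-strongly convex if $F(u)\ge F(v)+\langle\nabla F(v),u-v\rangle+\frac\mu2\|u-v\|_2^2$ for all $u,v$. *)

From Stdlib Require Import Reals.
From mathcomp Require Import all_boot.

Set Implicit Arguments.
Unset Strict Implicit.

Open Scope R_scope.

Definition vec (d : nat) := 'I_d -> R.

Definition vadd d (u v : vec d) : vec d := fun i => u i + v i.
Definition vsub d (u v : vec d) : vec d := fun i => u i - v i.

Definition dot d (u v : vec d) : R := \big[Rplus/0]_(i < d) (u i * v i).
Definition norm2 d (u : vec d) : R := sqrt (dot u u).

Definition has_gradient d (F : vec d -> R) (x g : vec d) : Prop :=
  forall eps : R, 0 < eps -> exists delta : R, 0 < delta /\
    forall h : vec d, norm2 h < delta ->
      Rabs (F (vadd x h) - F x - dot g h) <= eps * norm2 h.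

Definition strongly_convex d (F : vec d -> R) (gradF : vec d -> vec d) (mu : R) : Prop :=
  forall u v : vec d,
    F u >= F v + dot (gradF v) (vsub u v) + mu / 2 * (norm2 (vsub u v)) ^ 2.

Definition Fprox d (F : vec d -> R) (lam : R) (y x : vec d) : R :=
  F x + lam * (norm2 (vsub x y)) ^ 2.

(* The minimizer [s] of [F_{lam,p}] is a stationary point, [grad F s = -2 lam (s - p)].
   With strong convexity this makes [F_{lam,p}] grow quadratically around [s] with
   modulus [lam + mu/2], so an [eps]-approximate minimizer lies within
   [sqrt (2 eps F_{lam,p}(s) / (2 lam + mu)) <= sqrt (2 eps F(p) / (2 lam + mu))] of [s].
   Strong monotonicity of [grad F] at [p] and [s] gives
   [(2 lam + mu) |p - s|^2 <= <grad F p, p - s>], so Cauchy-Schwarz bounds [|p - s|]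
   by [|grad F p| / (2 lam + mu)]. Both inequalities then follow from the triangle
   inequality. *)

From HB Require Import structures.
From Stdlib Require Import Reals Lra Psatz FunctionalExtensionality.
From mathcomp Require Import all_boot.
Open Scope R_scope.

Set Implicit Arguments.
Unset Strict Implicit.

Lemma Rplus_assoc_law : associative Rplus.
Proof. by move=> x y z; ring. Qed.

HB.instance Definition _ :=
  Monoid.isComLaw.Build R 0 Rplus Rplus_assoc_law Rplus_comm Rplus_0_l.

Section Vectors.

Variable d : nat.
Implicit Types (u v w x y z : vec d) (k : R).

Definition vscale k u : vec d := fun i => k * u i.

Lemma vsub_split x y z : vsub x z = vadd (vsub x y) (vsub y z).
Proof. by apply: functional_extensionality => i; rewrite /vsub /vadd; ring. Qed.

Lemma vsub_vaddl x y z : vsub (vadd x y) z = vadd (vsub x z) y.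
Proof. by apply: functional_extensionality => i; rewrite /vsub /vadd; ring. Qed.

Lemma dotC u v : dot u v = dot v u.
Proof. by apply: eq_bigr => i _; rewrite Rmult_comm. Qed.

Lemma dotDl u v w : dot (vadd u v) w = dot u w + dot v w.
Proof. by rewrite /dot -big_split; apply: eq_bigr => i _ /=; rewrite /vadd; ring. Qed.

Lemma dotZl k u v : dot (vscale k u) v = k * dot u v.
Proof.
rewrite /dot (big_morph (fun r => k * r) (id1 := 0) (op1 := Rplus)).
- by apply: eq_bigr => i _; rewrite /vscale; ring.
- by move=> a b; ring.
- by ring.
Qed.

Lemma dot_vsubC w x y : dot w (vsub x y) = - dot w (vsub y x).
Proof.
rewrite /dot (big_morph Ropp (id1 := 0) (op1 := Rplus)).
- by apply: eq_bigr => i _; rewrite /vsub; ring.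
- by move=> a b; ring.
- by ring.
Qed.

Lemma dot_ge0 u : 0 <= dot u u.
Proof.
apply: (big_ind (fun r => 0 <= r)); [lra | move=> a b; lra | move=> i _; nra].
Qed.

Lemma dot_self_eq0 u : dot u u = 0 -> forall i, u i = 0.
Proof.
move=> u0 i; move: u0; rewrite /dot (bigD1 i) //=.
set rest := bigop _ _ _.
have : 0 <= rest.
  by apply: (big_ind (fun r => 0 <= r)); [lra | move=> a b; lra | move=> j _; nra].
nra.
Qed.

Lemma norm2_ge0 u : 0 <= norm2 u.
Proof. exact: sqrt_pos. Qed.

Lemma norm2_sq u : norm2 u ^ 2 = dot u u.
Proof. by rewrite /norm2 pow2_sqrt //; apply: dot_ge0. Qed.

Lemma norm2_vsubC x y : norm2 (vsub x y) = norm2 (vsub y x).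
Proof.
rewrite /norm2 dot_vsubC dotC dot_vsubC; congr sqrt; ring.
Qed.

Lemma norm2Z k u : norm2 (vscale k u) = Rabs k * norm2 u.
Proof.
rewrite /norm2 dotZl dotC dotZl -Rmult_assoc sqrt_mult_alt; last nra.
by rewrite sqrt_Rsqr_abs.
Qed.

Lemma norm2_addE u v :
  norm2 (vadd u v) ^ 2 = norm2 u ^ 2 + 2 * dot u v + norm2 v ^ 2.
Proof. by rewrite !norm2_sq dotDl !(dotC _ (vadd u v)) !dotDl (dotC v u); ring. Qed.

Lemma cauchy_schwarz u v : dot u v <= norm2 u * norm2 v.
Proof.
set a := norm2 u; set b := norm2 v.
have [a0 b0] : 0 <= a /\ 0 <= b by split; apply: norm2_ge0.
have [ab0 | ab_pos] : a * b = 0 \/ 0 < a * b by nra.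
  have dot_eq0 w : norm2 w = 0 -> forall z, dot w z = 0.
    move=> w0 z; have /dot_self_eq0 w_0 : dot w w = 0 by rewrite -norm2_sq w0; ring.
    by rewrite /dot big1 // => i _; rewrite w_0; ring.
  case: (Rmult_integral _ _ ab0) => [a_0 | b_0].
  - by rewrite (dot_eq0 u a_0); lra.
  - by rewrite dotC (dot_eq0 v b_0); lra.
(* expanding [0 <= |b u - a v|^2] gives [0 <= 2 a b (a b - <u, v>)] *)
have := norm2_addE (vscale b u) (vscale (- a) v).
rewrite !norm2Z dotZl dotC dotZl (dotC v u) Rabs_Ropp !Rabs_pos_eq // -/a -/b.
have := pow2_ge_0 (norm2 (vadd (vscale b u) (vscale (- a) v))).
nra.
Qed.

Lemma norm2_triangle u v : norm2 (vadd u v) <= norm2 u + norm2 v.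
Proof.
have := norm2_addE u v; have := cauchy_schwarz u v.
have := norm2_ge0 u; have := norm2_ge0 v; have := norm2_ge0 (vadd u v).
nra.
Qed.

End Vectors.

Section Gradients.

Variable d : nat.
Implicit Types (F G : vec d -> R) (f g h p x : vec d).

Lemma has_gradientD F G x f g :
  has_gradient F x f -> has_gradient G x g ->
  has_gradient (fun y => F y + G y) x (vadd f g).
Proof.
move=> dF dG eps eps_pos.
have [dlF [dlF_pos dFb]] := dF (eps / 2) ltac:(lra).
have [dlG [dlG_pos dGb]] := dG (eps / 2) ltac:(lra).
exists (Rmin dlF dlG); split; first exact: Rmin_pos.
move=> h h_small.
have hF := dFb h (Rlt_le_trans _ _ _ h_small (Rmin_l _ _)).
have hG := dGb h (Rlt_le_trans _ _ _ h_small (Rmin_r _ _)).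
rewrite dotDl.
have := Rabs_triang (F (vadd x h) - F x - dot f h) (G (vadd x h) - G x - dot g h).
have -> : F (vadd x h) + G (vadd x h) - (F x + G x) - (dot f h + dot g h) =
          F (vadd x h) - F x - dot f h + (G (vadd x h) - G x - dot g h) by ring.
lra.
Qed.

Lemma has_gradient_sqdist (lam : R) p x :
  has_gradient (fun y => lam * norm2 (vsub y p) ^ 2) x (vscale (2 * lam) (vsub x p)).
Proof.
move=> eps eps_pos; exists (eps / (Rabs lam + 1)); split.
  by apply: Rdiv_lt_0_compat; [lra | have := Rabs_pos lam; lra].
move=> h h_small.
have -> : lam * norm2 (vsub (vadd x h) p) ^ 2 - lam * norm2 (vsub x p) ^ 2
          - dot (vscale (2 * lam) (vsub x p)) h = lam * norm2 h ^ 2.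
  by rewrite vsub_vaddl norm2_addE dotZl; ring.
have n0 := norm2_ge0 h; have l0 := Rabs_pos lam.
have delta_eps : eps / (Rabs lam + 1) * (Rabs lam + 1) = eps by field; lra.
set delta := eps / _ in h_small delta_eps.
have := Rmult_le_pos _ _ l0 n0.
rewrite Rabs_mult (Rabs_pos_eq _ (pow2_ge_0 _)); nra.
Qed.

Lemma has_gradient_min F x g :
  has_gradient F x g -> (forall y, F x <= F y) -> forall i, g i = 0.
Proof.
move=> dF x_min; apply: dot_self_eq0.
have := norm2_sq g; have := norm2_ge0 g; set n := norm2 g => n0 gg.
suff : n = 0 by move=> n_0; rewrite -gg n_0; ring.
apply: Rle_antisym => //; apply: Rnot_lt_le => n_pos.
have [dl [dl_pos dFb]] := dF (n / 2) ltac:(lra).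
(* a step of length [dl / 2] along [-g] would decrease [F] *)
pose t := dl / (2 * n); pose h := vscale (- t) g.
have t_pos : 0 < t by apply: Rdiv_lt_0_compat; lra.
have nh : norm2 h = dl / 2.
  rewrite /h norm2Z Rabs_Ropp Rabs_pos_eq; last lra.
  by rewrite -/n /t; field; lra.
have := dFb h ltac:(lra).
have := x_min (vadd x h).
have gh : dot g h = - t * n ^ 2 by rewrite /h dotC dotZl -norm2_sq.
rewrite gh nh.
move=> Fle /(Rle_trans _ _ _ (Rle_abs _)) upper.
have : t * n ^ 2 = dl * n / 2 by rewrite /t; field; lra.
nra.
Qed.

Lemma has_gradient_Fprox F (gradF : vec d -> vec d) (lam : R) p x :
  has_gradient F x (gradF x) ->
  has_gradient (Fprox F lam p) x (vadd (gradF x) (vscale (2 * lam) (vsub x p))).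
Proof. by move=> dF; apply: has_gradientD => //; apply: has_gradient_sqdist. Qed.

End Gradients.

Lemma strongly_convex_grad_monotone d (F : vec d -> R) (gradF : vec d -> vec d) mu u v :
  strongly_convex F gradF mu ->
  mu * norm2 (vsub u v) ^ 2 <= dot (gradF u) (vsub u v) - dot (gradF v) (vsub u v).
Proof.
move=> F_convex; have := F_convex u v; have := F_convex v u.
by rewrite (norm2_vsubC v u) (dot_vsubC _ v u); lra.
Qed.

Section ProximalPoint.

Variables (d : nat) (F : vec d -> R) (gradF : vec d -> vec d) (mu lam : R).
Variables (p s : vec d).
Hypothesis gradFP : forall x, has_gradient F x (gradF x).
Hypothesis F_convex : strongly_convex F gradF mu.
Hypothesis s_min : forall x, Fprox F lam p s <= Fprox F lam p x.

Lemma prox_stationary : gradF s = vscale (- 2 * lam) (vsub s p).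
Proof.
have grad0 := has_gradient_min (has_gradient_Fprox lam p (gradFP s)) s_min.
apply: functional_extensionality => i; have := grad0 i.
by rewrite /vadd /vscale; lra.
Qed.

Lemma prox_value_le : Fprox F lam p s <= F p.
Proof.
have := s_min p; rewrite /Fprox.
have -> : norm2 (vsub p p) = 0.
  by rewrite /norm2 /dot big1 ?sqrt_0 // => i _; rewrite /vsub; ring.
lra.
Qed.

Lemma prox_quadratic_growth x :
  Fprox F lam p s + (lam + mu / 2) * norm2 (vsub x s) ^ 2 <= Fprox F lam p x.
Proof.
have := F_convex x s; rewrite prox_stationary dotZl /Fprox.
rewrite (vsub_split x s p) norm2_addE dotC; lra.
Qed.

Lemma prox_dist_le_grad : 0 < 2 * lam + mu ->
  norm2 (vsub p s) <= norm2 (gradF p) / (2 * lam + mu).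
Proof.
move=> c_pos.
have := strongly_convex_grad_monotone p s F_convex.
rewrite prox_stationary dotZl (dotC (vsub s p)) (dot_vsubC _ s p) -norm2_sq.
have := cauchy_schwarz (gradF p) (vsub p s).
have := norm2_ge0 (vsub p s); have := norm2_ge0 (gradF p).
set r := norm2 (vsub p s); set g := norm2 (gradF p) => g0 r0 cs mono.
(* [(2 lam + mu) r^2 <= <grad F p, p - s> <= g r] *)
apply: (Rmult_le_reg_r (2 * lam + mu)) => //.
have -> : g / (2 * lam + mu) * (2 * lam + mu) = g by field; lra.
nra.
Qed.

Lemma approx_prox_dist eps xt : 0 < 2 * lam + mu -> 0 <= eps ->
  Fprox F lam p xt <= (1 + eps) * Fprox F lam p s ->
  norm2 (vsub xt s) <= sqrt (2 * eps / (2 * lam + mu) * F p).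
Proof.
move=> c_pos eps0 xt_approx.
have grow := prox_quadratic_growth xt; have sF := prox_value_le.
rewrite -(sqrt_pow2 _ (norm2_ge0 (vsub xt s))).
apply: sqrt_le_1_alt.
apply: (Rmult_le_reg_r (2 * lam + mu)) => //.
have -> : 2 * eps / (2 * lam + mu) * F p * (2 * lam + mu) = 2 * eps * F p by field; lra.
nra.
Qed.

End ProximalPoint.

Theorem corollaryC1 (d : nat) (F : vec d -> R) (gradF : vec d -> vec d)
  (mu lam eps : R) (xprev xstar xt : vec d) :
  (forall x : vec d, 0 <= F x) ->
  (forall x : vec d, has_gradient F x (gradF x)) ->
  0 < mu ->
  strongly_convex F gradF mu ->
  0 < lam ->
  0 <= eps < 1 ->
  (forall x : vec d, Fprox F lam xprev xstar <= Fprox F lam xprev x) ->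
  Fprox F lam xprev xt <= (1 + eps) * Fprox F lam xprev xstar ->
  norm2 (vsub xt xprev) <=
    sqrt (2 * eps / (2 * lam + mu) * F xprev) + norm2 (gradF xprev) / (2 * lam + mu)
  /\
  norm2 (vsub xt xprev) >=
    norm2 (vsub xprev xstar) - sqrt (2 * eps / (2 * lam + mu) * F xprev).
Proof.
move=> _ gradFP mu_pos F_convex lam_pos [eps0 _] xstar_min xt_approx.
have c_pos : 0 < 2 * lam + mu by lra.
have near := approx_prox_dist gradFP F_convex xstar_min c_pos eps0 xt_approx.
have step := prox_dist_le_grad gradFP F_convex xstar_min c_pos.
have upper : norm2 (vsub xt xprev) <= norm2 (vsub xt xstar) + norm2 (vsub xprev xstar).
  by rewrite (vsub_split xt xstar) (norm2_vsubC xprev xstar); apply: norm2_triangle.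
have lower : norm2 (vsub xprev xstar) <= norm2 (vsub xt xprev) + norm2 (vsub xt xstar).
  by rewrite (vsub_split xprev xt) (norm2_vsubC xt xprev); apply: norm2_triangle.
split; lra.
Qed.
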